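(* Let $\{(\mathbf{x}_i,y_i)\}_{i=1}^n\subset\mathbb{R}^p\times\mathbb{R}$, $s>0$, and let $\mathcal{K}$ be a Mercer kernel. For $\lambda>0$ consider $$\Psi(\widetilde C)=\frac1{n^2}\sum_{i,j=1}^n\omega^s_{i,j}\big(y_i-y_j+(\mathbf{x}_j-\mathbf{x}_i)^T\widetilde C\mathbf{k}_i^{1/2}\big)^2+\lambda\sum_{j=1}^p\|\widetilde{\mathbf{c}}^j\|_2,\qquad \widetilde C\in\mathbb{R}^{p\times n}.$$ Let $$\lambda_{\max}=\max_{1\le k\le p}\frac2{n^2}\Big\|\sum_{i,j=1}^n\omega^s_{i,j}(y_i-y_j)(x_i^k-x_j^k)\mathbf{k}_i^{1/2}\Big\|_2.$$ Then for all $\lambda\ge\lambda_{\max}$, the optimal solution of $\min_{\widetilde C}\Psi(\widetilde C)$ is $\widetilde C=0$ (the zero $p\times n$ matrix minimizes $\Psi$).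
   Context: $\omega^s_{i,j}=\exp(-\|\mathbf{x}_j-\mathbf{x}_i\|^2/(2s^2))$; $x_i^k$ is the $k$-th coordinate of $\mathbf{x}_i$. $K=[\mathcal{K}(\mathbf{x}_i,\mathbf{x}_j)]_{i,j=1}^n$, $K^{1/2}$ its symmetric positive semidefinite square root, $\mathbf{k}_i^{1/2}$ the $i$-th column of $K^{1/2}$; $\widetilde{\mathbf{c}}^j$ is the $j$-th row of $\widetilde C$ and $\|\cdot\|_2$ the Euclidean norm. *)

From HB Require Import structures.
From mathcomp Require Import all_boot all_order all_algebra.
From mathcomp Require Import all_classical all_reals all_analysis.
Set Implicit Arguments. Unset Strict Implicit. Unset Printing Implicit Defensive.
Import Order.TTheory GRing.Theory Num.Theory.
Import numFieldNormedType.Exports.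
Local Open Scope ring_scope.

Definition sqnorm (R : realType) (m : nat) (v : 'rV[R]_m) : R :=
  \sum_(k < m) v ord0 k ^+ 2.

Definition norm2 (R : realType) (m : nat) (v : 'rV[R]_m) : R :=
  Num.sqrt (sqnorm v).

Definition omega (R : realType) (p n : nat) (s : R) (x : 'I_n -> 'rV[R]_p)
  (i j : 'I_n) : R :=
  expR (- (sqnorm (x j - x i)) / (2 * s ^+ 2)).

Definition mercer_kernel (R : realType) (p : nat)
  (Kf : 'rV[R]_p -> 'rV[R]_p -> R) : Prop :=
  continuous (fun z : 'rV[R]_p * 'rV[R]_p => Kf z.1 z.2) /\
  (forall u v, Kf u v = Kf v u) /\
  (forall (m : nat) (z : 'I_m -> 'rV[R]_p) (c : 'I_m -> R),
     0 <= \sum_(a < m) \sum_(b < m) c a * c b * Kf (z a) (z b)).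

Definition gram (R : realType) (p n : nat) (Kf : 'rV[R]_p -> 'rV[R]_p -> R)
  (x : 'I_n -> 'rV[R]_p) : 'M[R]_n :=
  \matrix_(i, j) Kf (x i) (x j).

Definition is_psd_sqrt (R : realType) (n : nat) (K S : 'M[R]_n) : Prop :=
  S^T = S /\ (forall v : 'rV[R]_n, 0 <= (v *m S *m v^T) ord0 ord0) /\ S *m S = K.

(* The objective Psi. Khalf's i-th column is k_i^{1/2}; x_i are row vectors,
   so (x_j - x_i)^T C k_i^{1/2} is ((x j - x i) *m C *m col i Khalf) 0 0. *)
Definition Psi (R : realType) (p n : nat) (s lambda : R)
  (x : 'I_n -> 'rV[R]_p) (y : 'I_n -> R) (Khalf : 'M[R]_n)
  (C : 'M[R]_(p, n)) : R :=
  (n%:R ^+ 2)^-1 * \sum_(i < n) \sum_(j < n)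
     omega s x i j * (y i - y j + ((x j - x i) *m C *m col i Khalf) ord0 ord0) ^+ 2
  + lambda * \sum_(j < p) norm2 (row j C).

Definition lambda_max (R : realType) (p n : nat) (s : R)
  (x : 'I_n -> 'rV[R]_p) (y : 'I_n -> R) (Khalf : 'M[R]_n) : R :=
  \big[Num.max/0]_(k < p)
    (2 / (n%:R ^+ 2) *
      norm2 (\sum_(i < n) \sum_(j < n)
               (omega s x i j * (y i - y j) * (x i ord0 k - x j ord0 k))
                 *: (col i Khalf)^T)).

From HB Require Import structures.
From mathcomp Require Import all_boot all_order all_algebra.
From mathcomp Require Import all_classical all_reals all_analysis.
From mathcomp Require Import ring lra.
Set Implicit Arguments. Unset Strict Implicit. Unset Printing Implicit Defensive.
Import Order.TTheory GRing.Theory Num.Theory.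
Local Open Scope ring_scope.

(** Expanding the square, the data term of Psi is bounded below by its
    linearisation at 0, so
      Psi C >= Psi 0 + sum_k (lambda ||c^k|| - (2/n^2) <c^k, g_k>),
    where (2/n^2) ||g_k|| are the quantities maximised in lambda_max.  By
    Cauchy-Schwarz each summand is at least (lambda - (2/n^2) ||g_k||) ||c^k||,
    which is nonnegative as soon as lambda >= lambda_max. *)

Section CauchySchwarz.

Variables (R : realType) (m : nat).

Lemma lagrange_identity (u v : 'I_m -> R) :
  2 * ((\sum_a u a ^+ 2) * (\sum_b v b ^+ 2) - (\sum_a u a * v a) ^+ 2) =
  \sum_a \sum_b (u a * v b - u b * v a) ^+ 2.
Proof.
have expand a b : (u a * v b - u b * v a) ^+ 2 =
    u a ^+ 2 * v b ^+ 2 + v a ^+ 2 * u b ^+ 2 - 2 * ((u a * v a) * (u b * v b)).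
  by ring.
under [RHS]eq_bigr do under eq_bigr do rewrite expand.
under [RHS]eq_bigr do rewrite sumrB big_split /= -!mulr_sumr.
rewrite sumrB big_split /= -!mulr_sumr -!mulr_suml.
ring.
Qed.

Lemma cauchy_schwarz_norm2 (u v : 'rV[R]_m) :
  `|\sum_l u ord0 l * v ord0 l| <= norm2 u * norm2 v.
Proof.
have sqnorm_ge0 (w : 'rV[R]_m) : 0 <= sqnorm w.
  by apply: sumr_ge0 => l _; apply: sqr_ge0.
have sq_le : (\sum_l u ord0 l * v ord0 l) ^+ 2 <= sqnorm u * sqnorm v.
  rewrite -subr_ge0 -(pmulr_rge0 _ (ltr0Sn R 1)) lagrange_identity.
  by apply: sumr_ge0 => a _; apply: sumr_ge0 => b _; apply: sqr_ge0.
by rewrite /norm2 -sqrtrM // -sqrtr_sqr ler_sqrt // mulr_ge0.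
Qed.

End CauchySchwarz.

Section ZeroIsOptimal.

Variables (R : realType) (p n : nat) (s : R).
Variables (x : 'I_n -> 'rV[R]_p) (y : 'I_n -> R) (Khalf : 'M[R]_n).

Let w := omega s x.

(* The g_k of the header: -(2/n^2) g_k is the k-th row of the gradient of the
   data term of Psi at 0. *)
Definition residual_correlation (k : 'I_p) : 'rV[R]_n :=
  \sum_(i < n) \sum_(j < n)
    (w i j * (y i - y j) * (x i ord0 k - x j ord0 k)) *: (col i Khalf)^T.

Lemma residual_correlation_le_lambda_max k :
  2 / n%:R ^+ 2 * norm2 (residual_correlation k) <= lambda_max s x y Khalf.
Proof. exact: (le_bigmax 0 (fun k => 2 / n%:R ^+ 2 * norm2 (residual_correlation k))). Qed.

Lemma Psi_at0 lambda :
  Psi s lambda x y Khalf 0 = (n%:R ^+ 2)^-1 * \sum_i \sum_j w i j * (y i - y j) ^+ 2.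
Proof.
rewrite /Psi [X in lambda * X]big1 ?mulr0 ?addr0 => [|k _].
  by congr (_ * _); apply: eq_bigr => i _; apply: eq_bigr => j _;
     rewrite mulmx0 mul0mx mxE addr0.
by rewrite /norm2 /sqnorm big1 ?sqrtr0 // => l _; rewrite !mxE expr0n.
Qed.

Lemma cross_term (C : 'M[R]_(p, n)) :
  \sum_i \sum_j w i j * (y i - y j) * ((x j - x i) *m C *m col i Khalf) ord0 ord0
  = - \sum_k \sum_l C k l * residual_correlation k ord0 l.
Proof.
pose F (ij : 'I_n * 'I_n) (kl : 'I_p * 'I_n) :=
  w ij.1 ij.2 * (y ij.1 - y ij.2) * (x ij.2 ord0 kl.1 - x ij.1 ord0 kl.1)
  * C kl.1 kl.2 * Khalf kl.2 ij.1.
transitivity (\sum_ij \sum_kl F ij kl).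
  rewrite pair_big; apply: eq_bigr => -[i j] _ /=.
  rewrite -(pair_big xpredT xpredT (fun k l => F (i, j) (k, l))) /= exchange_big.
  rewrite mxE mulr_sumr; apply: eq_bigr => l _.
  rewrite !mxE mulr_suml mulr_sumr; apply: eq_bigr => k _.
  rewrite !mxE /F /=; ring.
rewrite exchange_big [X in _ = - X]pair_big -sumrN; apply: eq_bigr => -[k l] _ /=.
rewrite summxE; under [X in _ = - (_ * X)]eq_bigr do rewrite summxE.
rewrite [X in _ = - (_ * X)]pair_big mulr_sumr -sumrN.
apply: eq_bigr => -[i j] _ /=; rewrite !mxE /F /=; ring.
Qed.

Lemma data_term_ge (C : 'M[R]_(p, n)) :
  \sum_i \sum_j w i j * (y i - y j) ^+ 2
    - 2 * \sum_k \sum_l C k l * residual_correlation k ord0 l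
  <= \sum_i \sum_j w i j * (y i - y j + ((x j - x i) *m C *m col i Khalf) ord0 ord0) ^+ 2.
Proof.
rewrite -mulrN -cross_term mulr_sumr -big_split /=; apply: ler_sum => i _.
rewrite mulr_sumr -big_split /=; apply: ler_sum => j _.
set b := (_ *m _ *m _) ord0 ord0.
have w_b2_ge0 : 0 <= w i j * b ^+ 2 by rewrite mulr_ge0 ?expR_ge0 ?sqr_ge0.
have -> : w i j * (y i - y j + b) ^+ 2 =
    w i j * (y i - y j) ^+ 2 + 2 * (w i j * (y i - y j) * b) + w i j * b ^+ 2 by ring.
by rewrite lerDl.
Qed.

Lemma row_penalty_ge lambda (C : 'M[R]_(p, n)) k :
  lambda_max s x y Khalf <= lambda ->
  2 / n%:R ^+ 2 * \sum_l C k l * residual_correlation k ord0 l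
  <= lambda * norm2 (row k C).
Proof.
move=> /(le_trans (residual_correlation_le_lambda_max k)) g_le_lambda.
have c_ge0 : 0 <= 2 / n%:R ^+ 2 :> R by rewrite divr_ge0 ?exprn_ge0.
have cs := cauchy_schwarz_norm2 (row k C) (residual_correlation k).
have -> : \sum_l C k l * residual_correlation k ord0 l =
    \sum_l row k C ord0 l * residual_correlation k ord0 l.
  by apply: eq_bigr => l _; rewrite mxE.
apply: (le_trans (ler_wpM2l c_ge0 (ler_norm _))).
apply: (le_trans (ler_wpM2l c_ge0 cs)).
rewrite mulrCA [leRHS]mulrC; apply: ler_wpM2l => //.
exact: sqrtr_ge0.
Qed.

End ZeroIsOptimal.

Theorem theorem9 (R : realType) (p n : nat) (x : 'I_n -> 'rV[R]_p) (y : 'I_n -> R)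
  (s : R) (hs : 0 < s) (Kf : 'rV[R]_p -> 'rV[R]_p -> R) (hK : mercer_kernel Kf)
  (Khalf : 'M[R]_n) (hKhalf : is_psd_sqrt (gram Kf x) Khalf)
  (lambda : R) (hl : 0 < lambda) (hlmax : lambda_max s x y Khalf <= lambda) :
  forall C : 'M[R]_(p, n), Psi s lambda x y Khalf 0 <= Psi s lambda x y Khalf C.
Proof.
move=> C; rewrite Psi_at0 /Psi.
set N := (n%:R ^+ 2)^-1.
set T := \sum_k \sum_l C k l * residual_correlation s x y Khalf k ord0 l.
have N_ge0 : 0 <= N by rewrite invr_ge0 exprn_ge0.
have data_ge := ler_wpM2l N_ge0 (data_term_ge s x y Khalf C).
have penalty_ge : 2 * N * T <= lambda * \sum_k norm2 (row k C).
  rewrite /T mulr_sumr [leRHS]mulr_sumr; apply: ler_sum => k _.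
  exact: row_penalty_ge.
move: data_ge; rewrite mulrBr -/T mulrA [N * 2]mulrC; lra.
Qed.
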